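(* Let $\sigma>0$ and let $f,g,h$ be smooth, nowhere-vanishing real functions of $(y,s)$ on an open set $U\subset\mathbb{R}^2$ satisfying the bilinear equations $$\Big(\tfrac12 D_yD_s-1\Big)g\cdot g=-fh,\qquad \Big(\tfrac{1}{\sqrt{\sigma}}D_s+1\Big)f\cdot h=g^2,\qquad \Big(D_yD_s+\tfrac{2}{\sqrt{\sigma}}D_s+\sqrt{\sigma}D_y\Big)f\cdot h=0 .$$ Define the hodograph map $(y,s)\mapsto(x,t)$ by $$x=y-(\ln g)_s,\qquad t=s,$$ and the functions $$u=-(\ln g)_{ss},\qquad \rho=\frac{g^2}{fh}.$$ Then $\partial x/\partial y=fh/g^2=\rho^{-1}\neq 0$ and $\partial x/\partial s=u$; in particular the map is locally invertible, and on any subset where it is a diffeomorphism onto its image, $u$ and $\rho$, regarded as functions of $(x,t)$, satisfy the two-component Hunter–Saxton system with $\kappa=2$: $$\rho_t+(\rho u)_x=0,\qquad m_t+u\,m_x+2m\,u_x-\sigma\rho\rho_x=0,\quad m=2-u_{xx},$$ i.e. $u_{txx}-4u_x+2u_xu_{xx}+uu_{xxx}=-\sigma\rho\rho_x$ together with $\rho_t+(\rho u)_x=0$. *)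

From Stdlib Require Import Reals.
Open Scope R_scope.

Definition open2 (U : R -> R -> Prop) : Prop :=
  forall y s, U y s -> exists eps, 0 < eps /\
    forall y' s', Rabs (y' - y) < eps -> Rabs (s' - s) < eps -> U y' s'.

Definition cont2 (F : R -> R -> R) (y s : R) : Prop :=
  forall eps, 0 < eps -> exists delta, 0 < delta /\
    forall y' s', Rabs (y' - y) < delta -> Rabs (s' - s) < delta ->
      Rabs (F y' s' - F y s) < eps.

(* [smooth_fam U F D]: F is C^infinity on the open set U, and
   D i j is its partial derivative  d^i/d(1st var)^i d^j/d(2nd var)^j.
   (All iterated partials exist and are jointly continuous on U; by Schwarz
   the order of differentiation is then irrelevant.) *)
Definition smooth_fam (U : R -> R -> Prop) (F : R -> R -> R)
  (D : nat -> nat -> R -> R -> R) : Prop :=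
  (forall y s, U y s -> D 0%nat 0%nat y s = F y s) /\
  forall (i j : nat) y s, U y s ->
    derivable_pt_lim (fun a => D i j a s) y (D (S i) j y s) /\
    derivable_pt_lim (fun b => D i j y b) s (D i (S j) y s) /\
    cont2 (D i j) y s.

(* Hirota bilinear derivatives of a.b at (y,s), written out, where Da, Db are
   the partial-derivative families of a and b (index 1 = y, index 2 = s). *)
Definition hirota_y (Da Db : nat -> nat -> R -> R -> R) (y s : R) : R :=
  Da 1%nat 0%nat y s * Db 0%nat 0%nat y s - Da 0%nat 0%nat y s * Db 1%nat 0%nat y s.
Definition hirota_s (Da Db : nat -> nat -> R -> R -> R) (y s : R) : R :=
  Da 0%nat 1%nat y s * Db 0%nat 0%nat y s - Da 0%nat 0%nat y s * Db 0%nat 1%nat y s.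
Definition hirota_ys (Da Db : nat -> nat -> R -> R -> R) (y s : R) : R :=
  Da 1%nat 1%nat y s * Db 0%nat 0%nat y s - Da 1%nat 0%nat y s * Db 0%nat 1%nat y s
  - Da 0%nat 1%nat y s * Db 1%nat 0%nat y s + Da 0%nat 0%nat y s * Db 1%nat 1%nat y s.

(* hodograph x = y - (ln g)_s,  u = -(ln g)_ss,  rho = g^2/(f h) *)
Definition xmap (g : R -> R -> R) (Dg : nat -> nat -> R -> R -> R) (y s : R) : R :=
  y - Dg 0%nat 1%nat y s / g y s.
Definition uval (g : R -> R -> R) (Dg : nat -> nat -> R -> R -> R) (y s : R) : R :=
  - ((g y s * Dg 0%nat 2%nat y s - Dg 0%nat 1%nat y s ^ 2) / (g y s ^ 2)).
Definition rhoval (f g h : R -> R -> R) (y s : R) : R :=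
  g y s ^ 2 / (f y s * h y s).

From Stdlib Require Import Reals Lra.
From Coquelicot Require Import Coquelicot.
Open Scope R_scope.

(* The functions u, rho and all their derivatives are polynomials in y, the
   partial derivatives of f, g, h and 1/f, 1/g, 1/h; a syntax of such terms,
   closed under symbolic d_y and d_s, makes their smoothness a structural
   induction.  The bilinear equations read (ln g)_ys = 1 - 1/rho,
   (ln (f/h))_s = sqrt sigma (rho - 1), and give (ln (f h))_ys.  Hence x_y = 1/rho
   and x_s = u, so the inverse map (x,t) |-> (Y,t) has Y_x = rho, Y_t = - u rho.
   Since u_y = (1/rho)_s, i.e. rho_s + rho^2 u_y = 0 (the continuity equation in
   the variables (y,s)), the operators d_x = rho d_y and d_t = d_s - u rho d_y
   commute.  Finally u_x = - (ln rho)_s and m = 2 - u_xx =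
   rho^2 (2 + sqrt sigma (ln (f/h))_y), which reduces the momentum equation to
   (ln (f/h))_ys = sqrt sigma rho_y. *)

Lemma open2_locally_2d (U : R -> R -> Prop) y s : open2 U -> U y s -> locally_2d U y s.
Proof.
  intros HU Hys. destruct (HU y s Hys) as [eps [Heps Hball]].
  exists (mkposreal eps Heps). exact Hball.
Qed.

Lemma cont2_continuity_2d_pt F y s : cont2 F y s <-> continuity_2d_pt F y s.
Proof.
  split.
  - intros H eps. destruct (H eps (cond_pos eps)) as [d [Hd Hball]].
    exists (mkposreal d Hd). exact Hball.
  - intros H eps Heps. destruct (H (mkposreal eps Heps)) as [d Hball].
    exists d. split; [apply cond_pos | exact Hball].
Qed.

Lemma derivable_pt_lim_ext_loc (f g : R -> R) x l :
  locally x (fun z => f z = g z) -> derivable_pt_lim f x l -> derivable_pt_lim g x l.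
Proof.
  intros Hfg Hf. apply is_derive_Reals.
  apply (is_derive_ext_loc f g x l Hfg). apply is_derive_Reals. exact Hf.
Qed.

Lemma derivable_pt_lim_unique_loc (f g : R -> R) x l1 l2 :
  locally x (fun z => f z = g z) ->
  derivable_pt_lim f x l1 -> derivable_pt_lim g x l2 -> l1 = l2.
Proof.
  intros Hfg Hf Hg. apply (uniqueness_limite g x); [|exact Hg].
  exact (derivable_pt_lim_ext_loc f g x l1 Hfg Hf).
Qed.

Lemma derivable_pt_lim_Rinv (f : R -> R) x l :
  derivable_pt_lim f x l -> f x <> 0 ->
  derivable_pt_lim (fun a => / f a) x (- (l * (/ f x * / f x))).
Proof.
  intros Hf Hfx. apply is_derive_Reals in Hf. apply is_derive_Reals.
  replace (- (l * (/ f x * / f x))) with (- l / f x ^ 2) by (field; exact Hfx).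
  exact (is_derive_inv f x l Hf Hfx).
Qed.

Lemma MVT_increment_bound (F Fx : R -> R -> R) v x u c e d :
  Rabs (u - x) < d ->
  (forall z, Rabs (z - x) < d -> derivable_pt_lim (fun a => F a v) z (Fx z v)) ->
  (forall z, Rabs (z - x) < d -> Rabs (Fx z v - c) <= e) ->
  Rabs (F u v - F x v - c * (u - x)) <= e * Rabs (u - x).
Proof.
  intros Hu HF Hc.
  destruct (MVT_cor4 (fun a => F a v - c * a) (fun a => Fx a v - c) x (Rabs (u - x)))
    with (b := u) as [z [Hz Hzx]].
  - intros z Hz. apply is_derive_Reals.
    replace (Fx z v - c) with (Fx z v - c * 1) by ring.
    apply (derivable_pt_lim_minus (fun a => F a v) (fun a => c * a)); [apply HF; lra|].
    apply (derivable_pt_lim_scal (fun a => a)), derivable_pt_lim_id.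
  - lra.
  - replace (F u v - F x v - c * (u - x)) with ((Fx z v - c) * (u - x)) by lra.
    rewrite Rabs_mult. apply Rmult_le_compat_r; [apply Rabs_pos | apply Hc; lra].
Qed.

Lemma differentiable_pt_lim_of_partials (F Fx : R -> R -> R) x y ly :
  locally_2d (fun u v => derivable_pt_lim (fun a => F a v) u (Fx u v)) x y ->
  continuity_2d_pt Fx x y ->
  derivable_pt_lim (fun b => F x b) y ly ->
  differentiable_pt_lim F x y (Fx x y) ly.
Proof.
  intros [d0 HF] HFx Hly eps.
  assert (He2 : 0 < eps / 2) by (destruct eps; simpl; lra).
  destruct (HFx (mkposreal (eps / 2) He2)) as [d1 Hd1]. simpl in Hd1.
  destruct (Hly (eps / 2) He2) as [d2 Hd2].
  set (d := Rmin d0 (Rmin d1 d2)).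
  assert (Hd : 0 < d) by (apply Rmin_pos; [|apply Rmin_pos]; apply cond_pos).
  assert (Hd0 : d <= d0) by apply Rmin_l.
  assert (Hd1' : d <= d1) by (eapply Rle_trans; [apply Rmin_r | apply Rmin_l]).
  assert (Hd2' : d <= d2) by (eapply Rle_trans; [apply Rmin_r | apply Rmin_r]).
  exists (mkposreal d Hd). simpl. intros u v Hu Hv.
  assert (Bx : Rabs (F u v - F x v - Fx x y * (u - x)) <= eps / 2 * Rabs (u - x)).
  { apply (MVT_increment_bound F Fx v x u (Fx x y) (eps / 2) d Hu).
    - intros z Hz. apply HF; lra.
    - intros z Hz. apply Rlt_le, Hd1; lra. }
  assert (By : Rabs (F x v - F x y - ly * (v - y)) <= eps / 2 * Rabs (v - y)).
  { destruct (Req_dec v y) as [-> | Hvy].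
    - rewrite !Rminus_diag, Rmult_0_r, Rminus_0_r, Rabs_R0. lra.
    - assert (Hvy' : v - y <> 0) by lra.
      specialize (Hd2 (v - y) Hvy' ltac:(lra)).
      replace (y + (v - y)) with v in Hd2 by ring.
      replace (F x v - F x y - ly * (v - y))
        with (((F x v - F x y) / (v - y) - ly) * (v - y)) by (field; exact Hvy').
      rewrite Rabs_mult. apply Rmult_le_compat_r; [apply Rabs_pos | lra]. }
  replace (F u v - F x y - (Fx x y * (u - x) + ly * (v - y)))
    with ((F u v - F x v - Fx x y * (u - x)) + (F x v - F x y - ly * (v - y))) by ring.
  eapply Rle_trans; [apply Rabs_triang|].
  assert (M1 := Rmax_l (Rabs (u - x)) (Rabs (v - y))).
  assert (M2 := Rmax_r (Rabs (u - x)) (Rabs (v - y))).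
  destruct eps as [e He]; simpl in *. nra.
Qed.

Lemma differentiable_pt_lim_partials F x y lx ly :
  differentiable_pt_lim F x y lx ly ->
  derivable_pt_lim (fun a => F a y) x lx /\ derivable_pt_lim (fun b => F x b) y ly.
Proof.
  intros HF. split.
  - pose proof (derivable_pt_lim_comp_2d F (fun a => a) (fun _ => y) x lx ly 1 0 HF
      (derivable_pt_lim_id x) (derivable_pt_lim_const y x)) as H.
    replace (lx * 1 + ly * 0) with lx in H by ring. exact H.
  - pose proof (derivable_pt_lim_comp_2d F (fun _ => x) (fun b => b) y lx ly 0 1 HF
      (derivable_pt_lim_const x y) (derivable_pt_lim_id y)) as H.
    replace (lx * 0 + ly * 1) with ly in H by ring. exact H.
Qed.

Lemma differentiable_pt_lim_snd x y : differentiable_pt_lim (fun _ v => v) x y 0 1.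
Proof.
  apply (differentiable_pt_lim_of_partials (fun _ v => v) (fun _ _ => 0)).
  - apply locally_2d_forall. intros u v. apply derivable_pt_lim_const.
  - apply continuity_2d_pt_const.
  - apply derivable_pt_lim_id.
Qed.

Section PartialsFamily.

Variable U : R -> R -> Prop.

Definition partials_family (D : nat -> nat -> R -> R -> R) : Prop :=
  forall (i j : nat) y s, U y s ->
    derivable_pt_lim (fun a => D i j a s) y (D (S i) j y s) /\
    derivable_pt_lim (fun b => D i j y b) s (D i (S j) y s) /\
    cont2 (D i j) y s.

Variable D : nat -> nat -> R -> R -> R.
Hypothesis HD : partials_family D.

Lemma partials_family_at i j y s : U y s ->
  derivable_pt_lim (fun a => D i j a s) y (D (S i) j y s) /\
  derivable_pt_lim (fun b => D i j y b) s (D i (S j) y s) /\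
  continuity_2d_pt (D i j) y s.
Proof.
  intros Hys. destruct (HD i j y s Hys) as [Hy [Hs Hc]].
  split; [exact Hy | split; [exact Hs | apply cont2_continuity_2d_pt, Hc]].
Qed.

Lemma partials_family_Rinv y s : U y s -> D 0 0 y s <> 0 ->
  derivable_pt_lim (fun a => / D 0 0 a s) y (- (D 1 0 y s * (/ D 0 0 y s * / D 0 0 y s))) /\
  derivable_pt_lim (fun b => / D 0 0 y b) s (- (D 0 1 y s * (/ D 0 0 y s * / D 0 0 y s))) /\
  continuity_2d_pt (fun a b => / D 0 0 a b) y s.
Proof.
  intros Hys HD0. destruct (partials_family_at 0 0 y s Hys) as [Hy [Hs Hc]].
  split; [|split].
  - exact (derivable_pt_lim_Rinv (fun a => D 0 0 a s) y _ Hy HD0).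
  - exact (derivable_pt_lim_Rinv (fun b => D 0 0 y b) s _ Hs HD0).
  - exact (continuity_2d_pt_inv (D 0 0) y s Hc HD0).
Qed.

Hypothesis HU : open2 U.

Lemma partials_family_differentiable i j y s : U y s ->
  differentiable_pt_lim (D i j) y s (D (S i) j y s) (D i (S j) y s).
Proof.
  intros Hys. apply differentiable_pt_lim_of_partials.
  - apply (locally_2d_impl U); [|exact (open2_locally_2d U y s HU Hys)].
    apply locally_2d_forall. intros u v Huv. apply (HD i j u v Huv).
  - apply (partials_family_at (S i) j y s Hys).
  - apply (partials_family_at i j y s Hys).
Qed.

End PartialsFamily.

(* [Ycoord] denotes y, [Pf i j] denotes d_y^i d_s^j f and [Invf] denotes 1/f. *)
Inductive term : Type :=
| Cst (r : R) | Ycoord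
| Pf (i j : nat) | Pg (i j : nat) | Ph (i j : nat)
| Invf | Invg | Invh
| Add (a b : term) | Mul (a b : term) | Opp (a : term).

Fixpoint tdy (e : term) : term :=
  match e with
  | Cst _ => Cst 0 | Ycoord => Cst 1
  | Pf i j => Pf (S i) j | Pg i j => Pg (S i) j | Ph i j => Ph (S i) j
  | Invf => Opp (Mul (Pf 1 0) (Mul Invf Invf))
  | Invg => Opp (Mul (Pg 1 0) (Mul Invg Invg))
  | Invh => Opp (Mul (Ph 1 0) (Mul Invh Invh))
  | Add a b => Add (tdy a) (tdy b)
  | Mul a b => Add (Mul (tdy a) b) (Mul a (tdy b))
  | Opp a => Opp (tdy a)
  end.

Fixpoint tds (e : term) : term :=
  match e with
  | Cst _ | Ycoord => Cst 0
  | Pf i j => Pf i (S j) | Pg i j => Pg i (S j) | Ph i j => Ph i (S j)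
  | Invf => Opp (Mul (Pf 0 1) (Mul Invf Invf))
  | Invg => Opp (Mul (Pg 0 1) (Mul Invg Invg))
  | Invh => Opp (Mul (Ph 0 1) (Mul Invh Invh))
  | Add a b => Add (tds a) (tds b)
  | Mul a b => Add (Mul (tds a) b) (Mul a (tds b))
  | Opp a => Opp (tds a)
  end.

Definition lng_s := Mul (Pg 0 1) Invg.
Definition hodo_x := Add Ycoord (Opp lng_s).
Definition hodo_u := Opp (tds lng_s).
Definition rho := Mul (Pg 0 0) (Mul (Pg 0 0) (Mul Invf Invh)).
Definition inv_rho := Mul (Pf 0 0) (Mul (Ph 0 0) (Mul Invg Invg)).
Definition lnfoh_s := Add (Mul (Pf 0 1) Invf) (Opp (Mul (Ph 0 1) Invh)).
Definition lnfoh_y := Add (Mul (Pf 1 0) Invf) (Opp (Mul (Ph 1 0) Invh)).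
Definition lnfh_s := Add (Mul (Pf 0 1) Invf) (Mul (Ph 0 1) Invh).
Definition lnrho_s := Add (Mul (Cst 2) lng_s) (Opp lnfh_s).
(* m = 2 - u_xx, see [Dx_Dx_hodo_u]. *)
Definition hodo_m (q : R) := Mul rho (Mul rho (Add (Cst 2) (Mul (Cst q) lnfoh_y))).

(* The inverse (x,t) |-> (Y,t) of the hodograph map has Y_x = rho and
   Y_t = - u rho, so d_x and d_t act on functions of (y,s) as [Dx] and [Dt]. *)
Definition Dx (e : term) : term := Mul rho (tdy e).
Definition Dt (e : term) : term := Add (tds e) (Opp (Mul hodo_u (Mul rho (tdy e)))).

Section Terms.

Variables Df Dg Dh : nat -> nat -> R -> R -> R.

Fixpoint teval (e : term) (y s : R) : R :=
  match e with
  | Cst r => r | Ycoord => y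
  | Pf i j => Df i j y s | Pg i j => Dg i j y s | Ph i j => Dh i j y s
  | Invf => / Df 0 0 y s | Invg => / Dg 0 0 y s | Invh => / Dh 0 0 y s
  | Add a b => teval a y s + teval b y s
  | Mul a b => teval a y s * teval b y s
  | Opp a => - teval a y s
  end.

Lemma teval_tdy_tds e y s : teval (tdy (tds e)) y s = teval (tds (tdy e)) y s.
Proof. induction e; simpl; try rewrite IHe; try rewrite IHe1, IHe2; ring. Qed.

Lemma teval_Dt_Dx e y s :
  teval (Dt e) y s + teval hodo_u y s * teval (Dx e) y s = teval (tds e) y s.
Proof. cbn [Dt Dx teval]. ring. Qed.

Lemma teval_hodo_x (g : R -> R -> R) (y s : R) :
  Dg 0 0 y s = g y s -> teval hodo_x y s = xmap g Dg y s.
Proof. intros Hg. unfold xmap, Rminus, Rdiv. simpl. rewrite Hg. reflexivity. Qed.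

Lemma teval_hodo_u (g : R -> R -> R) (y s : R) :
  Dg 0 0 y s = g y s -> g y s <> 0 -> teval hodo_u y s = uval g Dg y s.
Proof. intros Hg Hg0. unfold uval. simpl. rewrite Hg. field. exact Hg0. Qed.

Lemma teval_rho (f g h : R -> R -> R) (y s : R) :
  Df 0 0 y s = f y s -> Dg 0 0 y s = g y s -> Dh 0 0 y s = h y s ->
  f y s <> 0 -> h y s <> 0 -> teval rho y s = rhoval f g h y s.
Proof. intros Hf Hg Hh Hf0 Hh0. unfold rhoval. simpl. rewrite Hf, Hg, Hh. field. auto. Qed.

Lemma teval_inv_rho (f g h : R -> R -> R) (y s : R) :
  Df 0 0 y s = f y s -> Dg 0 0 y s = g y s -> Dh 0 0 y s = h y s ->
  g y s <> 0 -> teval inv_rho y s = f y s * h y s / g y s ^ 2.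
Proof. intros Hf Hg Hh Hg0. simpl. rewrite Hf, Hg, Hh. field. exact Hg0. Qed.

Variable U : R -> R -> Prop.
Hypothesis HU : open2 U.
Hypotheses (HDf : partials_family U Df) (HDg : partials_family U Dg)
  (HDh : partials_family U Dh).
Hypotheses (Hf0 : forall y s, U y s -> Df 0 0 y s <> 0)
  (Hg0 : forall y s, U y s -> Dg 0 0 y s <> 0)
  (Hh0 : forall y s, U y s -> Dh 0 0 y s <> 0).

Lemma teval_partials e y s : U y s ->
  derivable_pt_lim (fun a => teval e a s) y (teval (tdy e) y s) /\
  derivable_pt_lim (fun b => teval e y b) s (teval (tds e) y s) /\
  continuity_2d_pt (teval e) y s.
Proof.
  intros Hys. induction e; simpl.
  - split; [|split]; [apply derivable_pt_lim_const.. | apply continuity_2d_pt_const].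
  - split; [apply derivable_pt_lim_id | split].
    + apply derivable_pt_lim_const.
    + apply continuity_2d_pt_id1.
  - exact (partials_family_at U Df HDf i j y s Hys).
  - exact (partials_family_at U Dg HDg i j y s Hys).
  - exact (partials_family_at U Dh HDh i j y s Hys).
  - exact (partials_family_Rinv U Df HDf y s Hys (Hf0 y s Hys)).
  - exact (partials_family_Rinv U Dg HDg y s Hys (Hg0 y s Hys)).
  - exact (partials_family_Rinv U Dh HDh y s Hys (Hh0 y s Hys)).
  - destruct IHe1 as [Hy1 [Hs1 Hc1]], IHe2 as [Hy2 [Hs2 Hc2]].
    split; [|split].
    + exact (derivable_pt_lim_plus _ _ _ _ _ Hy1 Hy2).
    + exact (derivable_pt_lim_plus _ _ _ _ _ Hs1 Hs2).
    + exact (continuity_2d_pt_plus _ _ _ _ Hc1 Hc2).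
  - destruct IHe1 as [Hy1 [Hs1 Hc1]], IHe2 as [Hy2 [Hs2 Hc2]].
    split; [|split].
    + exact (derivable_pt_lim_mult _ _ _ _ _ Hy1 Hy2).
    + exact (derivable_pt_lim_mult _ _ _ _ _ Hs1 Hs2).
    + exact (continuity_2d_pt_mult _ _ _ _ Hc1 Hc2).
  - destruct IHe as [Hy [Hs Hc]].
    split; [|split].
    + exact (derivable_pt_lim_opp _ _ _ Hy).
    + exact (derivable_pt_lim_opp _ _ _ Hs).
    + exact (continuity_2d_pt_opp _ _ _ Hc).
Qed.

Lemma teval_differentiable e y s : U y s ->
  differentiable_pt_lim (teval e) y s (teval (tdy e) y s) (teval (tds e) y s).
Proof.
  intros Hys. apply differentiable_pt_lim_of_partials.
  - apply (locally_2d_impl U); [|exact (open2_locally_2d U y s HU Hys)].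
    apply locally_2d_forall. intros u v Huv. apply (teval_partials e u v Huv).
  - apply (teval_partials (tdy e) y s Hys).
  - apply (teval_partials e y s Hys).
Qed.

Definition teq (e1 e2 : term) : Prop := forall y s, U y s -> teval e1 y s = teval e2 y s.

Lemma teq_locally_2d e1 e2 y s : teq e1 e2 -> U y s ->
  locally_2d (fun u v => teval e1 u v = teval e2 u v) y s.
Proof.
  intros H12 Hys. apply (locally_2d_impl U); [|exact (open2_locally_2d U y s HU Hys)].
  apply locally_2d_forall. exact H12.
Qed.

Lemma teq_tdy e1 e2 : teq e1 e2 -> teq (tdy e1) (tdy e2).
Proof.
  intros H12 y s Hys.
  apply (derivable_pt_lim_unique_loc (fun a => teval e1 a s) (fun a => teval e2 a s) y).
  - exact (locally_2d_1d_const_y _ y s (teq_locally_2d e1 e2 y s H12 Hys)).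
  - apply (teval_partials e1 y s Hys).
  - apply (teval_partials e2 y s Hys).
Qed.

Lemma teq_tds e1 e2 : teq e1 e2 -> teq (tds e1) (tds e2).
Proof.
  intros H12 y s Hys.
  apply (derivable_pt_lim_unique_loc (fun b => teval e1 y b) (fun b => teval e2 y b) s).
  - exact (locally_2d_1d_const_x _ y s (teq_locally_2d e1 e2 y s H12 Hys)).
  - apply (teval_partials e1 y s Hys).
  - apply (teval_partials e2 y s Hys).
Qed.

Lemma teq_Dx e1 e2 : teq e1 e2 -> teq (Dx e1) (Dx e2).
Proof. intros H12 y s Hys. cbn [Dx teval]. rewrite (teq_tdy e1 e2 H12 y s Hys). reflexivity. Qed.

Lemma teq_Dt e1 e2 : teq e1 e2 -> teq (Dt e1) (Dt e2).
Proof.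
  intros H12 y s Hys. cbn [Dt teval].
  rewrite (teq_tdy e1 e2 H12 y s Hys), (teq_tds e1 e2 H12 y s Hys). reflexivity.
Qed.

Lemma inv_rho_rho : teq (Mul inv_rho rho) (Cst 1).
Proof.
  intros y s Hys. simpl. field.
  repeat split; first [apply Hf0 | apply Hg0 | apply Hh0]; exact Hys.
Qed.

Lemma lnrho_s_rho y s : U y s -> teval lnrho_s y s * teval rho y s = teval (tds rho) y s.
Proof.
  intros Hys. simpl. field.
  repeat split; first [apply Hf0 | apply Hg0 | apply Hh0]; exact Hys.
Qed.

Lemma hodo_x_tds y s : teval (tds hodo_x) y s = teval hodo_u y s.
Proof. cbn [hodo_x hodo_u tds teval]. ring. Qed.

Section FirstEquation.

Hypothesis E1 : forall y s, U y s ->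
  / 2 * hirota_ys Dg Dg y s - Dg 0 0 y s * Dg 0 0 y s = - (Df 0 0 y s * Dh 0 0 y s).

Lemma lng_ys_eq : teq (tdy lng_s) (Add (Cst 1) (Opp inv_rho)).
Proof.
  intros y s Hys. specialize (E1 y s Hys). unfold hirota_ys in E1.
  assert (Hg := Hg0 y s Hys).
  assert (Hgys : Dg 1 1 y s = (Dg 1 0 y s * Dg 0 1 y s + Dg 0 0 y s * Dg 0 0 y s
                                - Df 0 0 y s * Dh 0 0 y s) / Dg 0 0 y s).
  { apply (Rmult_eq_reg_r (Dg 0 0 y s)); [|exact Hg]. field_simplify; [lra | exact Hg]. }
  simpl. rewrite Hgys. field. exact Hg.
Qed.

Lemma hodo_x_tdy y s : U y s -> teval (tdy hodo_x) y s = teval inv_rho y s.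
Proof.
  intros Hys. cbn [hodo_x tdy teval]. rewrite (lng_ys_eq y s Hys). cbn [teval]. ring.
Qed.

Lemma hodo_x_partials y s : U y s ->
  derivable_pt_lim (fun a => teval hodo_x a s) y (teval inv_rho y s) /\
  derivable_pt_lim (fun b => teval hodo_x y b) s (teval hodo_u y s).
Proof.
  intros Hys. destruct (teval_partials hodo_x y s Hys) as [Hy [Hs _]].
  rewrite (hodo_x_tdy y s Hys) in Hy. rewrite hodo_x_tds in Hs.
  split; [exact Hy | exact Hs].
Qed.

Lemma hodograph_jacobian (f g h : R -> R -> R) y s :
  (forall y s, U y s -> Df 0 0 y s = f y s) ->
  (forall y s, U y s -> Dg 0 0 y s = g y s) ->
  (forall y s, U y s -> Dh 0 0 y s = h y s) -> U y s ->
  derivable_pt_lim (fun a => xmap g Dg a s) y (f y s * h y s / g y s ^ 2) /\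
  f y s * h y s / g y s ^ 2 = / rhoval f g h y s /\
  f y s * h y s / g y s ^ 2 <> 0 /\
  derivable_pt_lim (fun b => xmap g Dg y b) s (uval g Dg y s).
Proof.
  intros Hf Hg Hh Hys.
  assert (Hfys : f y s <> 0) by (rewrite <- Hf by exact Hys; apply Hf0, Hys).
  assert (Hgys : g y s <> 0) by (rewrite <- Hg by exact Hys; apply Hg0, Hys).
  assert (Hhys : h y s <> 0) by (rewrite <- Hh by exact Hys; apply Hh0, Hys).
  assert (Hloc : locally_2d (fun a b => teval hodo_x a b = xmap g Dg a b) y s).
  { apply (locally_2d_impl U); [|exact (open2_locally_2d U y s HU Hys)].
    apply locally_2d_forall. intros a b Hab. apply teval_hodo_x, Hg, Hab. }
  destruct (hodo_x_partials y s Hys) as [Hx Hs].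
  rewrite (teval_inv_rho f g h) in Hx by auto.
  rewrite (teval_hodo_u g) in Hs by auto.
  split; [|split; [|split]].
  - exact (derivable_pt_lim_ext_loc _ _ y _ (locally_2d_1d_const_y _ y s Hloc) Hx).
  - unfold rhoval. field. auto.
  - apply Rmult_integral_contrapositive_currified;
      [apply Rmult_integral_contrapositive_currified | apply Rinv_neq_0_compat, pow_nonzero];
      assumption.
  - exact (derivable_pt_lim_ext_loc _ _ s _ (locally_2d_1d_const_x _ y s Hloc) Hs).
Qed.

(* u_y = - (ln g)_sys = (1/rho)_s. *)
Lemma rho_conservation y s : U y s ->
  teval (tds rho) y s + teval rho y s * teval rho y s * teval (tdy hodo_u) y s = 0.
Proof.
  intros Hys.
  assert (Huy : teval (tdy hodo_u) y s = teval (tds inv_rho) y s).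
  { cbn [hodo_u tdy teval]. rewrite teval_tdy_tds.
    rewrite (teq_tds _ _ lng_ys_eq y s Hys). cbn [tds teval]. ring. }
  assert (Hi := inv_rho_rho y s Hys).
  assert (Hi' := teq_tds _ _ inv_rho_rho y s Hys).
  cbn [tds teval] in Hi, Hi'. rewrite Huy.
  set (i := teval inv_rho y s) in *. set (r := teval rho y s) in *.
  set (i' := teval (tds inv_rho) y s) in *. set (r' := teval (tds rho) y s) in *.
  transitivity (r' * (1 - i * r) + r * (i' * r + i * r')); [ring|].
  rewrite Hi, Hi'. ring.
Qed.

Lemma Dt_Dx_comm e : teq (Dt (Dx e)) (Dx (Dt e)).
Proof.
  intros y s Hys. assert (K := rho_conservation y s Hys).
  cbn [Dt Dx tdy tds teval]. rewrite teval_tdy_tds.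
  replace (teval (tds rho) y s)
    with (- (teval rho y s * teval rho y s * teval (tdy hodo_u) y s)) by lra.
  ring.
Qed.

Lemma Dt_iter_Dx i e : teq (Dt (Nat.iter i Dx e)) (Nat.iter i Dx (Dt e)).
Proof.
  induction i as [|i IH]; intros y s Hys; [reflexivity|].
  rewrite !Nat.iter_succ. rewrite (Dt_Dx_comm _ y s Hys).
  exact (teq_Dx _ _ IH y s Hys).
Qed.

Lemma Dx_hodo_u : teq (Dx hodo_u) (Opp lnrho_s).
Proof.
  intros y s Hys. assert (K := rho_conservation y s Hys).
  rewrite <- (lnrho_s_rho y s Hys) in K.
  assert (Hr : teval rho y s <> 0).
  { intros Hr0. assert (Hi := inv_rho_rho y s Hys). cbn [teval] in Hi.
    rewrite Hr0 in Hi. lra. }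
  cbn [Dx teval]. apply (Rmult_eq_reg_l (teval rho y s)); [|exact Hr]. lra.
Qed.

Section SecondAndThirdEquations.

Variable q : R.
Hypothesis Hq : 0 < q.
Hypothesis E2 : forall y s, U y s ->
  / q * hirota_s Df Dh y s + Df 0 0 y s * Dh 0 0 y s = Dg 0 0 y s ^ 2.
Hypothesis E3 : forall y s, U y s ->
  hirota_ys Df Dh y s + 2 / q * hirota_s Df Dh y s + q * hirota_y Df Dh y s = 0.

Lemma lnfoh_s_eq : teq lnfoh_s (Mul (Cst q) (Add rho (Opp (Cst 1)))).
Proof.
  intros y s Hys. specialize (E2 y s Hys). unfold hirota_s in E2.
  assert (Hh := Hh0 y s Hys).
  assert (Hfs : Df 0 1 y s = (q * (Dg 0 0 y s ^ 2 - Df 0 0 y s * Dh 0 0 y s)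
                               + Df 0 0 y s * Dh 0 1 y s) / Dh 0 0 y s).
  { apply (Rmult_eq_reg_r (Dh 0 0 y s)); [|exact Hh].
    field_simplify; [|exact Hh]. rewrite <- E2. field. lra. }
  simpl. rewrite Hfs. field.
  repeat split; first [exact Hh | apply Hf0 | apply Hg0]; exact Hys.
Qed.

Lemma lnfoh_ys y s : U y s -> teval (tds lnfoh_y) y s = q * teval (tdy rho) y s.
Proof.
  intros Hys. transitivity (teval (tdy lnfoh_s) y s); [simpl; ring|].
  rewrite (teq_tdy _ _ lnfoh_s_eq y s Hys). cbn [tdy teval]. ring.
Qed.

Lemma lnfh_sy_eq y s : U y s ->
  teval (tdy lnfh_s) y s
  = - (q * teval rho y s * teval lnfoh_y y s) - 2 * (teval rho y s - 1).
Proof.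
  intros Hys. specialize (E2 y s Hys). specialize (E3 y s Hys).
  assert (Hh := Hh0 y s Hys). assert (Hf := Hf0 y s Hys). assert (Hg := Hg0 y s Hys).
  assert (Hs : hirota_s Df Dh y s = q * (Dg 0 0 y s ^ 2 - Df 0 0 y s * Dh 0 0 y s)).
  { rewrite <- E2. field. lra. }
  rewrite Hs in E3. unfold hirota_s in Hs. unfold hirota_ys, hirota_y in E3.
  assert (Hfs : Df 0 1 y s = (q * (Dg 0 0 y s ^ 2 - Df 0 0 y s * Dh 0 0 y s)
                               + Df 0 0 y s * Dh 0 1 y s) / Dh 0 0 y s).
  { apply (Rmult_eq_reg_r (Dh 0 0 y s)); [|exact Hh]. field_simplify; [lra | exact Hh]. }
  assert (Hfys : Df 1 1 y s = - (- Df 1 0 y s * Dh 0 1 y s - Df 0 1 y s * Dh 1 0 y s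
       + Df 0 0 y s * Dh 1 1 y s
       + 2 / q * (q * (Dg 0 0 y s ^ 2 - Df 0 0 y s * Dh 0 0 y s))
       + q * (Df 1 0 y s * Dh 0 0 y s - Df 0 0 y s * Dh 1 0 y s)) / Dh 0 0 y s).
  { apply (Rmult_eq_reg_r (Dh 0 0 y s)); [|exact Hh].
    field_simplify; [|split; [lra | exact Hh]]. field_simplify in E3; [lra | lra]. }
  simpl. rewrite Hfys, Hfs. field. repeat split; auto; lra.
Qed.

Lemma Dx_Dx_hodo_u : teq (Dx (Dx hodo_u)) (Add (Cst 2) (Opp (hodo_m q))).
Proof.
  intros y s Hys. rewrite (teq_Dx _ _ Dx_hodo_u y s Hys).
  cbn [Dx lnrho_s hodo_m tdy teval].
  rewrite (lng_ys_eq y s Hys), (lnfh_sy_eq y s Hys).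
  assert (Hi := inv_rho_rho y s Hys). cbn [teval] in *.
  nra.
Qed.

(* With [teval_Dt_Dx] and u_x = - (ln rho)_s, this is m_t + u m_x + 2 m u_x = q^2 rho rho_x. *)
Lemma momentum_in_ys y s : U y s ->
  teval (tds (hodo_m q)) y s - 2 * teval (hodo_m q) y s * teval lnrho_s y s
  = q * q * teval rho y s * teval rho y s * teval (tdy rho) y s.
Proof.
  intros Hys. cbn [hodo_m tds teval].
  rewrite (lnfoh_ys y s Hys), <- (lnrho_s_rho y s Hys). ring.
Qed.

Section InverseMap.

Variables (W : R -> R -> Prop) (DY : nat -> nat -> R -> R -> R).
Hypotheses (HW : open2 W) (HDY : partials_family W DY).
Hypothesis HWU : forall x t, W x t -> U (DY 0 0 x t) t.
Hypothesis HX : forall x t, W x t -> teval hodo_x (DY 0 0 x t) t = x.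

Local Notation Y := (DY 0 0).

Lemma teval_Y_partials e x t : W x t ->
  derivable_pt_lim (fun a => teval e (Y a t) t) x (teval (tdy e) (Y x t) t * DY 1 0 x t) /\
  derivable_pt_lim (fun b => teval e (Y x b) b) t
    (teval (tdy e) (Y x t) t * DY 0 1 x t + teval (tds e) (Y x t) t) /\
  continuity_2d_pt (fun a b => teval e (Y a b) b) x t.
Proof.
  intros Hxt.
  pose proof (differentiable_pt_lim_comp (teval e) Y (fun _ b => b) x t _ _ _ _ 0 1
    (teval_differentiable e _ _ (HWU x t Hxt))
    (partials_family_differentiable W DY HDY HW 0 0 x t Hxt)
    (differentiable_pt_lim_snd x t)) as Hd.
  destruct (differentiable_pt_lim_partials _ _ _ _ _ Hd) as [Hx Ht].
  split; [|split].
  - replace (teval (tdy e) (Y x t) t * DY 1 0 x t)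
      with (teval (tdy e) (Y x t) t * DY 1 0 x t + teval (tds e) (Y x t) t * 0) by ring.
    exact Hx.
  - replace (teval (tdy e) (Y x t) t * DY 0 1 x t + teval (tds e) (Y x t) t)
      with (teval (tdy e) (Y x t) t * DY 0 1 x t + teval (tds e) (Y x t) t * 1) by ring.
    exact Ht.
  - apply differentiable_continuity_pt. do 2 eexists. exact Hd.
Qed.

(* Differentiate x = hodo_x (Y x t, t) in x and in t. *)
Lemma Y_partials x t : W x t ->
  DY 1 0 x t = teval rho (Y x t) t /\
  DY 0 1 x t = - (teval hodo_u (Y x t) t * teval rho (Y x t) t).
Proof.
  intros Hxt. assert (Hys := HWU x t Hxt).
  assert (HXloc : locally_2d (fun a b => teval hodo_x (Y a b) b = a) x t).
  { apply (locally_2d_impl W); [apply locally_2d_forall; exact HX|].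
    exact (open2_locally_2d W x t HW Hxt). }
  destruct (teval_Y_partials hodo_x x t Hxt) as [Hx [Ht _]].
  assert (Dx1 := derivable_pt_lim_unique_loc _ (fun a => a) x _ _
    (locally_2d_1d_const_y _ x t HXloc) Hx (derivable_pt_lim_id x)).
  assert (Dt0 := derivable_pt_lim_unique_loc _ (fun _ => x) t _ _
    (locally_2d_1d_const_x _ x t HXloc) Ht (derivable_pt_lim_const x t)).
  rewrite (hodo_x_tdy _ _ Hys) in Dx1, Dt0. rewrite hodo_x_tds in Dt0.
  assert (Hi := inv_rho_rho _ _ Hys). cbn [teval] in Hi.
  set (i := teval inv_rho (Y x t) t) in *. set (r := teval rho (Y x t) t) in *.
  set (u := teval hodo_u (Y x t) t) in *.
  split.
  - transitivity (DY 1 0 x t * (i * r)); [rewrite Hi; ring|].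
    transitivity ((i * DY 1 0 x t) * r); [ring | rewrite Dx1; ring].
  - transitivity (DY 0 1 x t * (i * r)); [rewrite Hi; ring|].
    transitivity ((i * DY 0 1 x t + u) * r - u * r); [ring | rewrite Dt0; ring].
Qed.

Lemma teval_Y_Dx_Dt e x t : W x t ->
  derivable_pt_lim (fun a => teval e (Y a t) t) x (teval (Dx e) (Y x t) t) /\
  derivable_pt_lim (fun b => teval e (Y x b) b) t (teval (Dt e) (Y x t) t) /\
  continuity_2d_pt (fun a b => teval e (Y a b) b) x t.
Proof.
  intros Hxt. destruct (Y_partials x t Hxt) as [HYx HYt].
  destruct (teval_Y_partials e x t Hxt) as [Hx [Ht Hc]].
  rewrite HYx in Hx. rewrite HYt in Ht. cbn [Dx Dt teval].
  split; [|split]; [| |exact Hc].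
  - replace (teval rho (Y x t) t * teval (tdy e) (Y x t) t)
      with (teval (tdy e) (Y x t) t * teval rho (Y x t) t) by ring.
    exact Hx.
  - replace (teval (tds e) (Y x t) t
             + - (teval hodo_u (Y x t) t * (teval rho (Y x t) t * teval (tdy e) (Y x t) t)))
      with (teval (tdy e) (Y x t) t * - (teval hodo_u (Y x t) t * teval rho (Y x t) t)
            + teval (tds e) (Y x t) t) by ring.
    exact Ht.
Qed.

Definition pullback (e : term) (i j : nat) (x t : R) : R :=
  teval (Nat.iter i Dx (Nat.iter j Dt e)) (Y x t) t.

Lemma pullback_partials_family e : partials_family W (pullback e).
Proof.
  intros i j x t Hxt. unfold pullback.
  destruct (teval_Y_Dx_Dt (Nat.iter i Dx (Nat.iter j Dt e)) x t Hxt) as [Hx [Ht Hc]].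
  split; [exact Hx | split; [|apply cont2_continuity_2d_pt, Hc]].
  rewrite (Dt_iter_Dx i _ _ _ (HWU x t Hxt)) in Ht. exact Ht.
Qed.

Lemma pullback_smooth_fam (f g h Y : R -> R -> R) :
  (forall y s, U y s -> Df 0 0 y s = f y s) ->
  (forall y s, U y s -> Dg 0 0 y s = g y s) ->
  (forall y s, U y s -> Dh 0 0 y s = h y s) ->
  (forall x t, W x t -> DY 0 0 x t = Y x t) ->
  smooth_fam W (fun x t => uval g Dg (Y x t) t) (pullback hodo_u) /\
  smooth_fam W (fun x t => rhoval f g h (Y x t) t) (pullback rho).
Proof.
  intros Hf Hg Hh HY.
  split; (split; [intros x t Hxt | apply pullback_partials_family]);
    rewrite <- (HY x t Hxt); assert (Hys := HWU x t Hxt).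
  - apply (teval_hodo_u g); [apply Hg, Hys | rewrite <- Hg by exact Hys; apply Hg0, Hys].
  - apply (teval_rho f g h); [apply Hf, Hys | apply Hg, Hys | apply Hh, Hys
      | rewrite <- Hf by exact Hys; apply Hf0, Hys | rewrite <- Hh by exact Hys; apply Hh0, Hys].
Qed.

Lemma pullback_conservation x t : W x t ->
  pullback rho 0 1 x t
  + (pullback rho 1 0 x t * pullback hodo_u 0 0 x t
     + pullback rho 0 0 x t * pullback hodo_u 1 0 x t) = 0.
Proof.
  intros Hxt. assert (Hys := HWU x t Hxt). cbv [pullback Nat.iter nat_rect].
  assert (Hmat := teval_Dt_Dx rho (Y x t) t).
  assert (K := rho_conservation _ _ Hys).
  cbn [Dx teval] in *. nra.
Qed.

Lemma pullback_momentum x t : W x t ->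
  (- pullback hodo_u 2 1 x t) + pullback hodo_u 0 0 x t * (- pullback hodo_u 3 0 x t)
  + 2 * (2 - pullback hodo_u 2 0 x t) * pullback hodo_u 1 0 x t
  - q * q * pullback rho 0 0 x t * pullback rho 1 0 x t = 0.
Proof.
  intros Hxt. assert (Hys := HWU x t Hxt). cbv [pullback Nat.iter nat_rect].
  assert (Hcomm := Dt_iter_Dx 2 hodo_u _ _ Hys). cbv [Nat.iter nat_rect] in Hcomm.
  rewrite <- Hcomm.
  rewrite (teq_Dt _ _ Dx_Dx_hodo_u _ _ Hys), (teq_Dx _ _ Dx_Dx_hodo_u _ _ Hys),
    (Dx_Dx_hodo_u _ _ Hys), (Dx_hodo_u _ _ Hys).
  assert (Hmat := teval_Dt_Dx (Add (Cst 2) (Opp (hodo_m q))) (Y x t) t).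
  assert (Hm := momentum_in_ys _ _ Hys).
  cbn [Dx tds teval] in *. nra.
Qed.

End InverseMap.

End SecondAndThirdEquations.

End FirstEquation.

End Terms.

Theorem theorem1
  (sigma : R) (Hsigma : 0 < sigma)
  (U : R -> R -> Prop) (HU : open2 U)
  (f g h : R -> R -> R) (Df Dg Dh : nat -> nat -> R -> R -> R)
  (Hf : smooth_fam U f Df) (Hg : smooth_fam U g Dg) (Hh : smooth_fam U h Dh)
  (Hf0 : forall y s, U y s -> f y s <> 0)
  (Hg0 : forall y s, U y s -> g y s <> 0)
  (Hh0 : forall y s, U y s -> h y s <> 0)
  (E1 : forall y s, U y s ->
     / 2 * hirota_ys Dg Dg y s - g y s * g y s = - (f y s * h y s))
  (E2 : forall y s, U y s ->
     / sqrt sigma * hirota_s Df Dh y s + f y s * h y s = g y s ^ 2)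
  (E3 : forall y s, U y s ->
     hirota_ys Df Dh y s + 2 / sqrt sigma * hirota_s Df Dh y s
       + sqrt sigma * hirota_y Df Dh y s = 0) :
  (forall y s, U y s ->
     derivable_pt_lim (fun a => xmap g Dg a s) y (f y s * h y s / g y s ^ 2) /\
     f y s * h y s / g y s ^ 2 = / rhoval f g h y s /\
     f y s * h y s / g y s ^ 2 <> 0 /\
     derivable_pt_lim (fun b => xmap g Dg y b) s (uval g Dg y s))
  /\
  (forall (V W : R -> R -> Prop) (Y : R -> R -> R) (DY : nat -> nat -> R -> R -> R),
     open2 V -> (forall y s, V y s -> U y s) -> open2 W ->
     smooth_fam W Y DY ->
     (forall y s, V y s -> W (xmap g Dg y s) s /\ Y (xmap g Dg y s) s = y) ->
     (forall x t, W x t -> V (Y x t) t /\ xmap g Dg (Y x t) t = x) ->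
     exists DU DR : nat -> nat -> R -> R -> R,
       smooth_fam W (fun x t => uval g Dg (Y x t) t) DU /\
       smooth_fam W (fun x t => rhoval f g h (Y x t) t) DR /\
       forall x t, W x t ->
         DR 0%nat 1%nat x t + (DR 1%nat 0%nat x t * DU 0%nat 0%nat x t
                               + DR 0%nat 0%nat x t * DU 1%nat 0%nat x t) = 0 /\
         (- DU 2%nat 1%nat x t) + DU 0%nat 0%nat x t * (- DU 3%nat 0%nat x t)
           + 2 * (2 - DU 2%nat 0%nat x t) * DU 1%nat 0%nat x t
           - sigma * DR 0%nat 0%nat x t * DR 1%nat 0%nat x t = 0).
Proof.
  destruct Hf as [Hf00 HDf], Hg as [Hg00 HDg], Hh as [Hh00 HDh].
  assert (Hq : 0 < sqrt sigma) by (apply sqrt_lt_R0; exact Hsigma).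
  assert (Df0 : forall y s, U y s -> Df 0%nat 0%nat y s <> 0)
    by (intros y s Hys; rewrite Hf00; auto).
  assert (Dg0 : forall y s, U y s -> Dg 0%nat 0%nat y s <> 0)
    by (intros y s Hys; rewrite Hg00; auto).
  assert (Dh0 : forall y s, U y s -> Dh 0%nat 0%nat y s <> 0)
    by (intros y s Hys; rewrite Hh00; auto).
  assert (E1' : forall y s, U y s -> / 2 * hirota_ys Dg Dg y s
      - Dg 0%nat 0%nat y s * Dg 0%nat 0%nat y s = - (Df 0%nat 0%nat y s * Dh 0%nat 0%nat y s))
    by (intros y s Hys; rewrite Hf00, Hg00, Hh00 by exact Hys; auto).
  assert (E2' : forall y s, U y s -> / sqrt sigma * hirota_s Df Dh y s
      + Df 0%nat 0%nat y s * Dh 0%nat 0%nat y s = Dg 0%nat 0%nat y s ^ 2)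
    by (intros y s Hys; rewrite Hf00, Hg00, Hh00 by exact Hys; auto).
  split.
  - intros y s Hys.
    exact (hodograph_jacobian Df Dg Dh U HU HDf HDg HDh Df0 Dg0 Dh0 E1' f g h y s
             Hf00 Hg00 Hh00 Hys).
  - intros V W Y DY _ HVU HW [HY00 HDY] _ HWV.
    assert (HWU : forall x t, W x t -> U (DY 0%nat 0%nat x t) t).
    { intros x t Hxt. rewrite HY00 by exact Hxt. apply HVU, (HWV x t Hxt). }
    assert (HX : forall x t, W x t -> teval Df Dg Dh hodo_x (DY 0%nat 0%nat x t) t = x).
    { intros x t Hxt. rewrite (teval_hodo_x Df Dg Dh g) by apply Hg00, HWU, Hxt.
      rewrite HY00 by exact Hxt. apply (HWV x t Hxt). }
    exists (pullback Df Dg Dh DY hodo_u), (pullback Df Dg Dh DY rho).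
    destruct (pullback_smooth_fam Df Dg Dh U HU HDf HDg HDh Df0 Dg0 Dh0 E1' W DY HW HDY HWU HX
                f g h Y Hf00 Hg00 Hh00 HY00) as [Hu Hrho].
    split; [exact Hu | split; [exact Hrho |]]. intros x t Hxt. split.
    + exact (pullback_conservation Df Dg Dh U HU HDf HDg HDh Df0 Dg0 Dh0 E1' W DY HWU x t Hxt).
    + rewrite <- (sqrt_sqrt sigma) by lra.
      exact (pullback_momentum Df Dg Dh U HU HDf HDg HDh Df0 Dg0 Dh0 E1' (sqrt sigma) Hq E2' E3
               W DY HWU x t Hxt).
Qed.
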